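(* Let $\gamma_X=(X,d_X(\cdot))$ be any $l$-Lipschitz dynamic metric space and let $\alpha\in(0,\infty)$. Then $d_{\mathtt{dyn}}(\gamma_X,\gamma_X^\alpha)\le l\alpha$.
   Context: A dynamic metric space (DMS) is a pair $\gamma_X=(X,d_X(\cdot))$ where $X$ is a nonempty finite set and $d_X(\cdot):\mathbf{R}\times X\times X\to\mathbf{R}_+$ satisfies: each $d_X(t)$ is a pseudometric, some $d_X(t_0)$ is a metric, and $t\mapsto d_X(t)(x,x')$ is continuous for all $x,x'$. It is $l$-Lipschitz if each $t\mapsto d_X(t)(x,x')$ is $l$-Lipschitz. For $t\in\mathbf{R}$, $\lfloor t\rfloor_\alpha$ is the greatest element of $\alpha\mathbf{Z}$ not exceeding $t$. The $\alpha$-discretization $\gamma_X^\alpha$ is the family $(X,d_X^{\alpha\mathbf{Z}}(t))_{t\in\mathbf{R}}$ with $d_X^{\alpha\mathbf{Z}}(t):=d_X(\lfloor t\rfloor_\alpha)$. For families $\gamma_X=(X,d_X(\cdot))$, $\gamma_Y=(Y,d_Y(\cdot))$ of pseudometrics on finite sets indexed by $t\in\mathbf{R}$ (such as DMSs and their discretizations), let $(\bigvee_I d_X)(x,x'):=\min_{s\in I}d_X(s)(x,x')$ for closed intervals $I$, and $[t]^\varepsilon=[t-\varepsilon,t+\varepsilon]$. A tripod between $X,Y$ is a set $Z$ with surjections $\varphi_X:Z\to X$, $\varphi_Y:Z\to Y$; it is an $\varepsilon$-tripod if for all $t$, $z,z'$: $(\bigvee_{[t]^\varepsilon}d_X)(\varphi_X(z),\varphi_X(z'))\le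 d_Y(t)(\varphi_Y(z),\varphi_Y(z'))+2\varepsilon$ and $(\bigvee_{[t]^\varepsilon}d_Y)(\varphi_Y(z),\varphi_Y(z'))\le d_X(t)(\varphi_X(z),\varphi_X(z'))+2\varepsilon$. $d_{\mathtt{dyn}}(\gamma_X,\gamma_Y)$ is the minimum over tripods of the infimum of $\varepsilon$ for which the tripod is an $\varepsilon$-tripod. *)

From HB Require Import structures.
From mathcomp Require Import all_boot all_order all_algebra.
From mathcomp Require Import all_classical all_reals all_analysis.
Set Implicit Arguments. Unset Strict Implicit. Unset Printing Implicit Defensive.
Import Order.TTheory GRing.Theory Num.Theory.
Import numFieldNormedType.Exports.
Local Open Scope classical_set_scope.
Local Open Scope ring_scope.

Section Defs.
Variable R : realType.

Definition is_pseudometric (X : Type) (d : X -> X -> R) : Prop :=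
  (forall x y, 0 <= d x y) /\ (forall x, d x x = 0) /\
  (forall x y, d x y = d y x) /\ (forall x y z, d x z <= d x y + d y z).

Definition is_metric (X : Type) (d : X -> X -> R) : Prop :=
  is_pseudometric d /\ (forall x y, d x y = 0 -> x = y).

Definition is_DMS (X : finType) (d : R -> X -> X -> R) : Prop :=
  (exists x : X, True) /\
  (forall t, is_pseudometric (d t)) /\
  (exists t0, is_metric (d t0)) /\
  (forall x x', continuous (fun t : R => d t x x')).

Definition lipschitz_DMS (X : Type) (l : R) (d : R -> X -> X -> R) : Prop :=
  forall x x' s t, `|d s x x' - d t x x'| <= l * `|s - t|.

Definition floor_alpha (alpha t : R) : R := (Num.floor (t / alpha))%:~R * alpha.

Definition discretize (X : Type) (alpha : R) (d : R -> X -> X -> R) : R -> X -> X -> R :=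
  fun t => d (floor_alpha alpha t).

(* (\bigvee_{[a,b]} d)(x,x') = min_{s in [a,b]} d(s)(x,x') *)
Definition bigvee (X : Type) (d : R -> X -> X -> R) (a b : R) (x x' : X) : R :=
  inf [set d s x x' | s in [set s | a <= s <= b]].

Definition eps_tripod (X Y Z : Type) (dX : R -> X -> X -> R) (dY : R -> Y -> Y -> R)
  (phX : Z -> X) (phY : Z -> Y) (e : R) : Prop :=
  forall t z z',
    bigvee dX (t - e) (t + e) (phX z) (phX z') <= dY t (phY z) (phY z') + 2 * e /\
    bigvee dY (t - e) (t + e) (phY z) (phY z') <= dX t (phX z) (phX z') + 2 * e.

(* d_dyn: minimum over tripods of the infimum of admissible eps,
   i.e. the infimum over all (tripod, eps) pairs; +oo if there are none. *)
Definition d_dyn (X Y : Type) (dX : R -> X -> X -> R) (dY : R -> Y -> Y -> R) : \bar R :=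
  ereal_inf [set (e%:E) | e in
    [set e : R | exists (Z : Type) (phX : Z -> X) (phY : Z -> Y),
        (forall x, exists z, phX z = x) /\ (forall y, exists z, phY z = y) /\
        eps_tripod dX dY phX phY e]].

End Defs.

From HB Require Import structures.
From mathcomp Require Import all_boot all_order all_algebra.
From mathcomp Require Import all_classical all_reals all_analysis.
From mathcomp Require Import lra.
Set Implicit Arguments. Unset Strict Implicit. Unset Printing Implicit Defensive.
Import Order.TTheory GRing.Theory Num.Theory.
Local Open Scope ring_scope.

(* Take the identity tripod between X and its discretization.
   Since 0 <= t - floor_alpha alpha t <= alpha, l-Lipschitzness gives
   |d(t) - d(floor_alpha alpha t)| <= l alpha pointwise, and the minimum over
   [t - l alpha, t + l alpha] is at most the value at t itself. *)

Section Tripods.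
Variable R : realType.
Implicit Types (e t : R).

Lemma bigvee_le_center (Y : Type) (dY : R -> Y -> Y -> R) t e (y y' : Y) :
  0 <= e -> (forall s, 0 <= dY s y y') ->
  bigvee dY (t - e) (t + e) y y' <= dY t y y'.
Proof.
move=> e0 dY_ge0; apply: ge_inf; first by exists 0 => _ [s _ <-].
by exists t => //=; apply/andP; split; lra.
Qed.

Lemma eps_tripod_id (Y : Type) (dX dY : R -> Y -> Y -> R) (e : R) :
  0 <= e -> (forall s y y', 0 <= dX s y y') -> (forall s y y', 0 <= dY s y y') ->
  (forall t y y', `|dX t y y' - dY t y y'| <= e) ->
  eps_tripod dX dY id id e.
Proof.
move=> e0 dX_ge0 dY_ge0 close t y y' /=.
have /ler_normlP[le_dYdX le_dXdY] := close t y y'.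
split.
- by apply: le_trans (bigvee_le_center t e0 (fun s => dX_ge0 s y y')) _; lra.
- by apply: le_trans (bigvee_le_center t e0 (fun s => dY_ge0 s y y')) _; lra.
Qed.

Lemma d_dyn_le_tripod (X Y Z : Type) (dX : R -> X -> X -> R) (dY : R -> Y -> Y -> R)
    (phX : Z -> X) (phY : Z -> Y) (e : R) :
  (forall x, exists z, phX z = x) -> (forall y, exists z, phY z = y) ->
  eps_tripod dX dY phX phY e -> (d_dyn dX dY <= e%:E)%E.
Proof.
move=> surjX surjY tri; apply: ereal_inf_lbound.
by exists e => //; exists Z, phX, phY.
Qed.

End Tripods.

Lemma floor_alpha_dist (R : realType) (alpha t : R) : 0 < alpha ->
  0 <= t - floor_alpha alpha t <= alpha.
Proof.
move=> a0; rewrite /floor_alpha.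
have t_ge := floor_le (t / alpha).
have := floorD1_gt (t / alpha); rewrite intrD.
set f : R := (Num.floor (t / alpha))%:~R => t_lt.
have tK : t / alpha * alpha = t by rewrite divfK // gt_eqF.
have : f * alpha <= t by rewrite -[leRHS]tK ler_pM2r.
have : t <= (f + 1) * alpha by rewrite -[leLHS]tK ler_pM2r // ltW.
by move=> le_t t_le; apply/andP; split; nra.
Qed.

Lemma lipschitz_DMS_ge0 (R : realType) (X : Type) (d : R -> X -> X -> R) (l : R) :
  lipschitz_DMS l d -> X -> 0 <= l.
Proof.
by move=> lip x; have := lip x x 1 0; rewrite subr0 normr1 mulr1; apply: le_trans.
Qed.

Lemma lipschitz_discretize_dist (R : realType) (X : Type) (d : R -> X -> X -> R)
    (l alpha : R) :
  0 <= l -> 0 < alpha -> lipschitz_DMS l d ->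
  forall t x x', `|d t x x' - discretize alpha d t x x'| <= l * alpha.
Proof.
move=> l0 a0 lip t x x'; apply: le_trans (lip _ _ _ _) _.
have /andP[fl_le le_alpha] := floor_alpha_dist t a0.
by rewrite ler_wpM2l // ger0_norm.
Qed.

Local Open Scope ereal_scope.

Theorem propositionA3 (R : realType) (X : finType) (d : R -> X -> X -> R) (l alpha : R) :
  is_DMS d -> lipschitz_DMS l d -> (0 < alpha)%R ->
  d_dyn d (discretize alpha d) <= (l * alpha)%:E.
Proof.
move=> [[x0 _] [pm _]] lip a0.
have l0 : (0 <= l)%R := lipschitz_DMS_ge0 lip x0.
have d_ge0 s x x' : (0 <= d s x x')%R by case: (pm s).
have id_surj (x : X) : exists z, id z = x by exists x.
apply: (d_dyn_le_tripod id_surj id_surj).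
apply: eps_tripod_id => //.
- by rewrite mulr_ge0 // ltW.
- by move=> s x x'; exact: d_ge0.
- exact: lipschitz_discretize_dist.
Qed.
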